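(* For any valid scheme (satisfying (C1)–(C8)), any database $n$, any message index $k$, and any $\mathcal{R}_U$, \[ 0\ \ge\ H\big(A_n^{[k,\mathcal{R}_U]}\mid Q_n^{[k,\mathcal{R}_U]},\mathcal{R}_U\big)-H(\mathcal{R}_S). \]
   Context: Model (SPIR with user-side common randomness). There are $N\ge1$ non-colluding databases, each storing the same $K\ge2$ messages $W_1,\dots,W_K$. Each message consists of $L$ i.i.d. symbols uniform over a sufficiently large finite field $\mathbb{F}_q$; entropies are in $q$-ary units, so $H(W_k)=L$ and $H(W_{1:K})=KL$. The databases share server-side common randomness $\mathcal{R}_S$, unknown to the user. The user holds user-side common randomness $\mathcal{R}_U$, a subset of the components of $\mathcal{R}_S$, unknown to the databases except for its size (uniform over subsets of given cardinality). $\mathcal{F}$ is the user's retrieval-strategy randomness. To retrieve $W_k$ the user sends $Q_n^{[k,\mathcal{R}_U]}$ to database $n$, receiving $A_n^{[k,\mathcal{R}_U]}$; $W_{\bar k}=\{W_j:j\ne k\}$. A valid scheme satisfies for all $k,n,\mathcal{R}_U$: (C1) $I(W_{1:K};k,\mathcal{F},\mathcal{R}_S,\mathcal{R}_U)=0$; (C2) $I(Q_{1:N}^{[k,\mathcal{R}_U]};W_{1:K},\mathcal{R}_S\setminus\mathcal{R}_U)=0$; (C3) $H(Q_{1:N}^{[k,\mathcal{R}_U]}\mid\mathcal{F})=0$; (C4) $H(A_n^{[k,\mathcal{R}_U]}\mid Q_n^{[k,\mathcal{R}_U]},W_{1:K},\mathcal{R}_S)=0$; (C5) $H(W_k\mid\mathcal{F},A_{1:N}^{[k,\mathcal{R}_U]},\mathcal{R}_U)=0$;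 (C6) user privacy: for all $k,k',n,\mathcal{R}_U$ there is $\mathcal{R}_U'$ with $H(\mathcal{R}_U')=H(\mathcal{R}_U)$ and $(Q_n^{[k,\mathcal{R}_U]},A_n^{[k,\mathcal{R}_U]},W_{1:K},\mathcal{R}_S)\sim(Q_n^{[k',\mathcal{R}_U']},A_n^{[k',\mathcal{R}_U']},W_{1:K},\mathcal{R}_S)$; (C7) $I(W_{\bar k};\mathcal{F},A_{1:N}^{[k,\mathcal{R}_U]},\mathcal{R}_U)=0$; (C8) $I(\mathcal{R}_S\setminus\mathcal{R}_U;\mathcal{F},A_{1:N}^{[k,\mathcal{R}_U]},W_k,\mathcal{R}_U)=0$. *)

From HB Require Import structures.
From mathcomp Require Import all_boot all_order all_algebra.
From mathcomp Require Import reals exp.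
Set Implicit Arguments. Unset Strict Implicit. Unset Printing Implicit Defensive.
Import Order.TTheory GRing.Theory Num.Theory.
Local Open Scope ring_scope.

Section InfoTheory.
Variables (R : realType) (Omega : finType) (P : {ffun Omega -> R}) (q : nat).

Definition is_distr : Prop := (forall w, 0 <= P w) /\ \sum_(w : Omega) P w = 1.

Definition prob (T : finType) (X : Omega -> T) (x : T) : R :=
  \sum_(w : Omega | X w == x) P w.

Definition logq (x : R) : R := ln x / ln (q%:R).

(* Shannon entropy, q-ary units (0 log 0 = 0 automatically since the
   term is multiplied by prob = 0) *)
Definition entropy (T : finType) (X : Omega -> T) : R :=
  - \sum_(x : T) prob X x * logq (prob X x).

Definition jointRV (T1 T2 : finType) (X : Omega -> T1) (Y : Omega -> T2) :
  Omega -> (T1 * T2)%type := fun w => (X w, Y w).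

Definition condEntropy (T1 T2 : finType) (X : Omega -> T1) (Y : Omega -> T2) : R :=
  entropy (jointRV X Y) - entropy Y.

Definition mutualInfo (T1 T2 : finType) (X : Omega -> T1) (Y : Omega -> T2) : R :=
  entropy X + entropy Y - entropy (jointRV X Y).

Definition same_distr (T : finType) (X Y : Omega -> T) : Prop :=
  forall x, prob X x = prob Y x.

Definition uniformRV (T : finType) (X : Omega -> T) : Prop :=
  forall x, prob X x = (#|T|%:R)^-1.

End InfoTheory.

(* Restriction of a component vector to the index set U: components outside
   U are erased (None).  Used for R_U (U), R_S \ R_U (~: U), W_{\bar k}. *)
Definition restrictRV (Omega : finType) (M : nat) (S : finType)
  (X : Omega -> {ffun 'I_M -> S}) (U : {set 'I_M}) :
  Omega -> {ffun 'I_M -> option S} :=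
  fun w => [ffun i => if i \in U then Some (X w i) else None].

Definition gatherRV (Omega : finType) (N : nat) (T : finType)
  (X : 'I_N -> Omega -> T) : Omega -> {ffun 'I_N -> T} :=
  fun w => [ffun n => X n w].

(* A SPIR scheme with user-side common randomness.
   - W : the messages W_{1:K}, each a vector of L symbols of the field F
   - RS : server-side common randomness, with M components in S
   - Fr : the user's strategy randomness F
   - Q n k U, A n k U : query to / answer from database n when retrieving
     W_k with user-side randomness R_U = components of RS indexed by U.
   The admissible R_U are the subsets of components of cardinality m. *)
Section Scheme.
Variables (R : realType) (Omega : finType) (P : {ffun Omega -> R})
  (F : finFieldType) (N K L M m : nat) (S TF TQ TA : finType)
  (W : Omega -> {ffun 'I_K -> {ffun 'I_L -> F}})
  (RS : Omega -> {ffun 'I_M -> S}) (Fr : Omega -> TF)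
  (Q : 'I_N -> 'I_K -> {set 'I_M} -> Omega -> TQ)
  (A : 'I_N -> 'I_K -> {set 'I_M} -> Omega -> TA).

Local Notation H := (entropy P #|F|).
Local Notation Hc := (condEntropy P #|F|).
Local Notation I := (mutualInfo P #|F|).
Local Notation RU U := (restrictRV RS U).
Local Notation Wk k := (fun w => W w k).
Local Notation Wbar k := (restrictRV W (~: [set k])).
Local Notation Qall k U := (gatherRV (fun n => Q n k U)).
Local Notation Aall k U := (gatherRV (fun n => A n k U)).

Record valid_scheme : Prop := {
  (* (C1) I(W_{1:K} ; k, F, R_S, R_U) = 0  (k is a fixed index) *)
  C1 : forall (k : 'I_K) (U : {set 'I_M}), #|U| = m ->
         I W (jointRV Fr (jointRV RS (RU U))) = 0;
  C2 : forall (k : 'I_K) (U : {set 'I_M}), #|U| = m ->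
         I (Qall k U) (jointRV W (RU (~: U))) = 0;
  C3 : forall (k : 'I_K) (U : {set 'I_M}), #|U| = m ->
         Hc (Qall k U) Fr = 0;
  C4 : forall (k : 'I_K) (n : 'I_N) (U : {set 'I_M}), #|U| = m ->
         Hc (A n k U) (jointRV (Q n k U) (jointRV W RS)) = 0;
  C5 : forall (k : 'I_K) (U : {set 'I_M}), #|U| = m ->
         Hc (Wk k) (jointRV Fr (jointRV (Aall k U) (RU U))) = 0;
  C6 : forall (k k' : 'I_K) (n : 'I_N) (U : {set 'I_M}), #|U| = m ->
         exists U' : {set 'I_M}, #|U'| = m /\ H (RU U') = H (RU U) /\
           same_distr P
             (jointRV (Q n k U) (jointRV (A n k U) (jointRV W RS)))
             (jointRV (Q n k' U') (jointRV (A n k' U') (jointRV W RS)));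
  C7 : forall (k : 'I_K) (U : {set 'I_M}), #|U| = m ->
         I (Wbar k) (jointRV Fr (jointRV (Aall k U) (RU U))) = 0;
  C8 : forall (k : 'I_K) (U : {set 'I_M}), #|U| = m ->
         I (RU (~: U)) (jointRV Fr (jointRV (Aall k U) (jointRV (Wk k) (RU U)))) = 0
}.

End Scheme.

From HB Require Import structures.
From mathcomp Require Import all_boot all_order all_algebra.
From mathcomp Require Import reals exp.
From mathcomp Require Import ring lra.
Import Order.TTheory GRing.Theory Num.Theory.
Local Open Scope ring_scope.
Set Implicit Arguments. Unset Strict Implicit. Unset Printing Implicit Defensive.

(* Pick a second message index k' != k.  By
   (C7) and (C3), W_k' is independent of (A_n, Q_n) (retrieving W_k);
   by (C7), (C3) and (C5) the remaining messages W_{\bar k'} are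
   independent of (A_n, Q_n, W_k') when retrieving W_k', and user privacy
   (C6) transports this independence to the retrieval of W_k.  Since
   (C4) makes everything a function of (Q_n, W_{1:K}, R_S), counting
   entropies gives H(A_n | Q_n) <= H(R_S), and conditioning on R_U can
   only decrease the left-hand side. *)

Section Entropy.
Variables (R : realType) (Omega : finType) (P : {ffun Omega -> R}) (q : nat).
Hypothesis HP : is_distr P.
Hypothesis Hq : (1 < q)%N.

Local Notation H := (entropy P q).
Local Notation I := (mutualInfo P q).
Local Notation J := jointRV.

Lemma P_ge0 w : 0 <= P w. Proof. by case: HP. Qed.

Lemma sum_P : \sum_w P w = 1. Proof. by case: HP. Qed.

Lemma prob_ge0 (T : finType) (X : Omega -> T) x : 0 <= prob P X x.
Proof. by apply: sumr_ge0 => w _; exact: P_ge0. Qed.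

Lemma expect_law (T : finType) (V : Omega -> T) (f : T -> R) :
  \sum_w P w * f (V w) = \sum_v prob P V v * f v.
Proof.
rewrite /prob.
transitivity (\sum_v \sum_w (if V w == v then P w * f v else 0)); last first.
  apply: eq_bigr => v _; rewrite big_distrl /= [RHS]big_mkcond /=.
  by apply: eq_bigr => w _; case: ifP; rewrite ?mul0r.
rewrite exchange_big /=; apply: eq_bigr => w _.
rewrite (bigD1 (V w)) //= eqxx big1 ?addr0 // => v /negbTE.
by rewrite eq_sym => ->.
Qed.

Lemma sum_prob (T : finType) (Z : Omega -> T) : \sum_z prob P Z z = 1.
Proof.
rewrite -sum_P (eq_bigr (fun z => prob P Z z * 1)) => [|z _]; last by rewrite mulr1.
by rewrite -expect_law; apply: eq_bigr => w _; rewrite mulr1.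
Qed.

Lemma prob_comp (T1 T2 : finType) (X : Omega -> T1) (g : T1 -> T2) y :
  prob P (fun w => g (X w)) y = \sum_(x | g x == y) prob P X x.
Proof.
rewrite [RHS]big_mkcond /= (eq_bigr (fun x => prob P X x * (g x == y)%:R)).
  rewrite -expect_law /prob big_mkcond /=; apply: eq_bigr => w _.
  by case: (g (X w) == y); rewrite ?mulr1 ?mulr0.
by move=> x _; case: (g x == y); rewrite ?mulr1 ?mulr0.
Qed.

Lemma prob_marginal (T1 T2 : finType) (X : Omega -> T1) (Z : Omega -> T2) z :
  \sum_x prob P (J X Z) (x, z) = prob P Z z.
Proof.
rewrite -[RHS]/(prob P (fun w => (J X Z w).2) z) prob_comp.
rewrite -(pair_big_dep xpredT (fun _ j => j == z)
            (fun x j => prob P (J X Z) (x, j))) /=.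
by apply: eq_bigr => x _; rewrite big_pred1_eq.
Qed.

Lemma P_le_prob (T : finType) (X : Omega -> T) w : P w <= prob P X (X w).
Proof.
rewrite /prob (bigD1 w) //= lerDl; apply: sumr_ge0 => w' _; exact: P_ge0.
Qed.

Lemma prob_le_fun (T1 T2 : finType) (X : Omega -> T1) (Y : Omega -> T2) g w :
  (forall w, X w = g (Y w)) -> prob P Y (Y w) <= prob P X (X w).
Proof.
move=> hX; rewrite /prob big_mkcond [X in _ <= X]big_mkcond /=.
apply: ler_sum => w' _.
case: eqP => [eY|_]; first by rewrite !hX eY eqxx.
by case: ifP; rewrite ?P_ge0.
Qed.

Lemma entropyE (T : finType) (X : Omega -> T) :
  H X = - \sum_w P w * logq q (prob P X (X w)).
Proof. by rewrite /entropy (expect_law X (fun v => logq q (prob P X v))). Qed.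

Lemma lnq_gt0 : 0 < ln (q%:R : R).
Proof. by apply: ln_gt0; rewrite ltr1n. Qed.

Lemma H_le_fun (T1 T2 : finType) (X : Omega -> T1) (Y : Omega -> T2) g :
  (forall w, X w = g (Y w)) -> H X <= H Y.
Proof.
move=> hX; rewrite !entropyE lerN2; apply: ler_sum => w _.
have [P0|Pn] := eqVneq (P w) 0; first by rewrite P0 !mul0r.
have Pp : 0 < P w by rewrite lt_def Pn P_ge0.
have pY := lt_le_trans Pp (P_le_prob Y w).
have pX := lt_le_trans pY (prob_le_fun w hX).
rewrite ler_wpM2l ?P_ge0 // /logq ler_pM2r ?invr_gt0 ?lnq_gt0 //.
by rewrite ler_ln ?posrE //; exact: prob_le_fun.
Qed.

Lemma H_eq (T1 T2 : finType) (X : Omega -> T1) (Y : Omega -> T2) g h :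
  (forall w, X w = g (Y w)) -> (forall w, Y w = h (X w)) -> H X = H Y.
Proof. by move=> hX hY; apply/eqP; rewrite eq_le (H_le_fun hX) (H_le_fun hY). Qed.

Lemma H_same_law (T T' : finType) (V1 V2 : Omega -> T) (X1 X2 : Omega -> T')
    (g : T -> T') :
  same_distr P V1 V2 -> (forall w, X1 w = g (V1 w)) ->
  (forall w, X2 w = g (V2 w)) -> H X1 = H X2.
Proof.
move=> sd h1 h2.
have E x : prob P X1 x = prob P X2 x.
  have -> : prob P X1 x = prob P (fun w => g (V1 w)) x by apply: eq_bigl => w; rewrite h1.
  have -> : prob P X2 x = prob P (fun w => g (V2 w)) x by apply: eq_bigl => w; rewrite h2.
  by rewrite !prob_comp; apply: eq_bigr => t _; rewrite sd.
by rewrite /entropy; congr (- _); apply: eq_bigr => x _; rewrite E.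
Qed.

(* The tangent-line bound behind Gibbs' inequality. *)
Lemma ln_le_subr1 (t : R) : 0 < t -> ln t <= t - 1.
Proof.
by move=> t0; have := @le_ln1Dx R (t - 1); rewrite addrCA subrr addr0; apply; lra.
Qed.

Lemma expect_logq_le (f : Omega -> R) :
  (forall w, 0 < P w -> 0 < f w) ->
  \sum_w P w * logq q (f w) <= (\sum_w P w * f w - 1) / ln (q%:R : R).
Proof.
move=> fpos.
have -> : \sum_w P w * f w - 1 = \sum_w P w * (f w - 1).
  rewrite [RHS](eq_bigr (fun w => P w * f w - P w)) ?sumrB ?sum_P // => w _.
  by rewrite mulrBr mulr1.
rewrite mulr_suml; apply: ler_sum => w _.
have [P0|Pn] := eqVneq (P w) 0; first by rewrite P0 !mul0r.
have Pp : 0 < P w by rewrite lt_def Pn P_ge0.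
rewrite -mulrA ler_wpM2l ?P_ge0 // /logq ler_pM2r ?invr_gt0 ?lnq_gt0 //.
exact: ln_le_subr1 (fpos w Pp).
Qed.

Lemma ratio_law_sum_le1 (T1 T2 T3 : finType)
    (X : Omega -> T1) (Y : Omega -> T2) (Z : Omega -> T3) :
  \sum_(v : T1 * (T2 * T3)) prob P (J X Z) (v.1, v.2.2) *
     (prob P (J Y Z) v.2 / prob P Z v.2.2) <= 1.
Proof.
rewrite -(pair_big xpredT xpredT (fun x p => prob P (J X Z) (x, p.2) *
     (prob P (J Y Z) p / prob P Z p.2))) /= exchange_big /=.
rewrite -(sum_prob (J Y Z)); apply: ler_sum => p _.
rewrite -mulr_suml prob_marginal.
have [->|nz] := eqVneq (prob P Z p.2) 0; first by rewrite mul0r prob_ge0.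
by rewrite mulrCA mulfV // mulr1.
Qed.

Lemma expect_ratio_le1 (T1 T2 T3 : finType)
    (X : Omega -> T1) (Y : Omega -> T2) (Z : Omega -> T3) :
  \sum_w P w * (prob P (J X Z) (J X Z w) * prob P (J Y Z) (J Y Z w)
     / (prob P (J X (J Y Z)) (J X (J Y Z) w) * prob P Z (Z w))) <= 1.
Proof.
pose V := J X (J Y Z).
rewrite (expect_law V (fun v => prob P (J X Z) (v.1, v.2.2) *
     prob P (J Y Z) v.2 / (prob P V v * prob P Z v.2.2))).
apply: le_trans (ratio_law_sum_le1 X Y Z); apply: ler_sum => v _.
have [->|nz] := eqVneq (prob P V v) 0.
  by rewrite mul0r mulr_ge0 ?prob_ge0 // divr_ge0 ?prob_ge0.
have cancel_p (p n b : R) : p != 0 -> p * (n / (p * b)) = n / b.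
  by move=> pn; rewrite invfM mulrCA !mulrA mulfK.
by rewrite cancel_p // mulrA.
Qed.

Lemma H_submod (T1 T2 T3 : finType)
    (X : Omega -> T1) (Y : Omega -> T2) (Z : Omega -> T3) :
  H (J X (J Y Z)) + H Z <= H (J X Z) + H (J Y Z).
Proof.
pose a w := prob P (J X (J Y Z)) (J X (J Y Z) w).
pose b w := prob P Z (Z w).
pose c w := prob P (J X Z) (J X Z w).
pose d w := prob P (J Y Z) (J Y Z w).
pose r w := c w * d w / (a w * b w).
have pos (T : finType) (V : Omega -> T) w :
  0 < P w -> 0 < prob P V (V w) by move=> Pp; exact: lt_le_trans Pp (P_le_prob V w).
have logr : \sum_w P w * (logq q (c w) + logq q (d w) - logq q (a w) - logq q (b w))
            = \sum_w P w * logq q (r w).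
  apply: eq_bigr => w _.
  have [P0|Pn] := eqVneq (P w) 0; first by rewrite P0 !mul0r.
  have Pp : 0 < P w by rewrite lt_def Pn P_ge0.
  rewrite /r /logq ln_div ?posrE ?mulr_gt0 ?pos // !lnM ?posrE ?pos //; ring.
have log_ratio_nonpos : \sum_w P w * logq q (r w) <= 0.
  apply: le_trans (expect_logq_le _) _ => [w Pp|].
    by rewrite /r divr_gt0 ?mulr_gt0 ?pos.
  by rewrite pmulr_lle0 ?invr_gt0 ?lnq_gt0 // subr_le0 expect_ratio_le1.
have expand : \sum_w P w * (logq q (c w) + logq q (d w) - logq q (a w) - logq q (b w))
  = \sum_w P w * logq q (c w) + \sum_w P w * logq q (d w)
    - \sum_w P w * logq q (a w) - \sum_w P w * logq q (b w).
  by rewrite -big_split -!sumrB; apply: eq_bigr => w _ /=; ring.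
move: log_ratio_nonpos; rewrite -logr expand !entropyE -/a -/b -/c -/d; lra.
Qed.

Lemma H_swap (T1 T2 : finType) (X : Omega -> T1) (Y : Omega -> T2) :
  H (J X Y) = H (J Y X).
Proof. exact: (@H_eq _ _ _ _ (fun p => (p.2, p.1)) (fun p => (p.2, p.1))). Qed.

Lemma H_fst (T1 T2 : finType) (X : Omega -> T1) (Y : Omega -> T2) : H X <= H (J X Y).
Proof. exact: (@H_le_fun _ _ _ _ fst). Qed.

Lemma H_const : H (fun _ => tt) = 0.
Proof.
rewrite entropyE (_ : prob P (fun _ : Omega => tt) tt = 1).
  by rewrite /logq ln1 mul0r big1 ?oppr0 // => w _; rewrite mulr0.
by rewrite -sum_P; apply: eq_bigl.
Qed.

(* Subadditivity: submodularity with a constant Z. *)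
Lemma H_subadd (T1 T2 : finType) (X : Omega -> T1) (Y : Omega -> T2) :
  H (J X Y) <= H X + H Y.
Proof.
have := H_submod X Y (fun _ => tt); rewrite H_const addr0.
rewrite (@H_eq _ _ (J X (J Y (fun _ => tt))) (J X Y)
           (fun p => (p.1, (p.2, tt))) (fun p => (p.1, p.2.1))) //.
rewrite (@H_eq _ _ (J X (fun _ => tt)) X (fun x => (x, tt)) fst) //.
by rewrite (@H_eq _ _ (J Y (fun _ => tt)) Y (fun x => (x, tt)) fst).
Qed.

Lemma condEntropy_cond_le (T1 T2 T3 : finType)
    (X : Omega -> T1) (Y : Omega -> T2) (Z : Omega -> T3) :
  condEntropy P q X (J Y Z) <= condEntropy P q X Y.
Proof.
have sub := H_submod X Z Y.
rewrite (@H_eq _ _ (J X (J Z Y)) (J X (J Y Z)) (fun p => (p.1, (p.2.2, p.2.1)))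
           (fun p => (p.1, (p.2.2, p.2.1)))) // (H_swap Z Y) in sub.
rewrite /condEntropy; lra.
Qed.

(* X determines Y: H(Y | X) = 0, i.e. Y is a.s. a function of X. *)
Definition determines (T1 T2 : finType) (X : Omega -> T1) (Y : Omega -> T2) : Prop :=
  H (J X Y) = H X.

Lemma det_fun (T1 T2 : finType) (X : Omega -> T1) (Y : Omega -> T2) g :
  (forall w, Y w = g (X w)) -> determines X Y.
Proof.
move=> hY; apply: (@H_eq _ _ _ _ (fun x => (x, g x)) fst) => // w.
by rewrite /J /jointRV hY.
Qed.

Lemma det_cond (T1 T2 : finType) (X : Omega -> T1) (Y : Omega -> T2) :
  condEntropy P q Y X = 0 -> determines X Y.
Proof. by rewrite /condEntropy /determines H_swap => /eqP; rewrite subr_eq0 => /eqP. Qed.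

Lemma det_le (T1 T2 : finType) (X : Omega -> T1) (Y : Omega -> T2) :
  determines X Y -> H Y <= H X.
Proof. by rewrite /determines => <-; exact: (@H_le_fun _ _ _ _ snd). Qed.

Lemma det_trans (T1 T2 T3 : finType)
    (X : Omega -> T1) (Y : Omega -> T2) (Z : Omega -> T3) :
  determines X Y -> determines Y Z -> determines X Z.
Proof.
rewrite /determines => hXY hYZ.
have s := H_submod X Z Y; rewrite hXY (H_swap Z Y) hYZ in s.
have l1 : H (J X Z) <= H (J X (J Z Y)).
  exact: (@H_le_fun _ _ _ _ (fun p => (p.1, p.2.1))).
have l2 := H_fst X Z.
apply/eqP; rewrite eq_le l2 andbT; lra.
Qed.

Lemma det_pair (T1 T2 T3 : finType)
    (X : Omega -> T1) (Y : Omega -> T2) (Z : Omega -> T3) :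
  determines X Y -> determines X Z -> determines X (J Y Z).
Proof.
rewrite /determines => hY hZ.
have s := H_submod Y Z X; rewrite (H_swap Y X) (H_swap Z X) hY hZ in s.
rewrite (@H_eq _ _ (J Y (J Z X)) (J X (J Y Z)) (fun p => (p.2.1, (p.2.2, p.1)))
           (fun p => (p.2.2, (p.1, p.2.1)))) // in s.
have l2 := H_fst X (J Y Z).
apply/eqP; rewrite eq_le l2 andbT; lra.
Qed.

Lemma mutualInfo_swap (T1 T2 : finType) (X : Omega -> T1) (Y : Omega -> T2) :
  I X Y = I Y X.
Proof. rewrite /mutualInfo (H_swap X Y); lra. Qed.

Lemma indep_det (T1 T2 T3 : finType)
    (Z : Omega -> T1) (X : Omega -> T2) (Y : Omega -> T3) :
  I Z X = 0 -> determines X Y -> I Z Y = 0.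
Proof.
rewrite /mutualInfo /determines => hZX hXY.
have s := H_submod Z X Y; rewrite hXY in s.
have l1 : H (J Z X) <= H (J Z (J X Y)).
  exact: (@H_le_fun _ _ _ _ (fun p => (p.1, p.2.1))).
have l3 := H_subadd Z Y.
apply/eqP; rewrite subr_eq0 eq_le l3 /=; lra.
Qed.

Lemma mutualInfo_same_law (T T1 T2 : finType) (V1 V2 : Omega -> T)
    (X1 X2 : Omega -> T1) (Y1 Y2 : Omega -> T2) (f : T -> T1) (g : T -> T2) :
  same_distr P V1 V2 ->
  (forall w, X1 w = f (V1 w)) -> (forall w, X2 w = f (V2 w)) ->
  (forall w, Y1 w = g (V1 w)) -> (forall w, Y2 w = g (V2 w)) ->
  I X1 Y1 = I X2 Y2.
Proof.
move=> sd hX1 hX2 hY1 hY2.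
rewrite /mutualInfo (H_same_law sd hX1 hX2) (H_same_law sd hY1 hY2); congr (_ - _).
apply: (H_same_law (g := fun v => (f v, g v)) sd) => w;
  by rewrite /J /jointRV ?hX1 ?hY1 ?hX2 ?hY2.
Qed.

(* A vector is recovered from one component and the remaining ones. *)
Lemma H_split_component (M : nat) (S : finType) (X : Omega -> {ffun 'I_M -> S})
    (i : 'I_M) :
  H X <= H (J (fun w => X w i) (restrictRV X (~: [set i]))).
Proof.
apply: (H_le_fun (g := fun p : S * {ffun 'I_M -> option S} =>
          [ffun j => if j == i then p.1 else odflt p.1 (p.2 j)])) => w.
apply/ffunP => j; rewrite !ffunE /=.
by case: eqP => [->|/eqP ne] //; rewrite !inE ne.
Qed.

Lemma condEntropy_le_randomness (TA TQ TW TS T1 T2 : finType)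
    (A : Omega -> TA) (Q : Omega -> TQ) (W : Omega -> TW) (RS : Omega -> TS)
    (X1 : Omega -> T1) (X2 : Omega -> T2) :
  H W <= H (J X1 X2) ->
  determines (J Q (J W RS)) (J X2 (J A (J Q X1))) ->
  I X1 (J A Q) = 0 -> I X2 (J A (J Q X1)) = 0 ->
  condEntropy P q A Q <= H RS.
Proof.
move=> hW hdet i1 i2.
have le1 := det_le hdet.
have le2 := H_subadd Q (J W RS).
have le3 := H_subadd W RS.
have le4 := H_subadd X1 X2.
have reorder : H (J A (J Q X1)) = H (J X1 (J A Q)).
  exact: (H_eq (g := fun p => (p.2.1, (p.2.2, p.1)))
               (h := fun p => (p.2.2, (p.1, p.2.1)))).
move: i1 i2; rewrite /mutualInfo /condEntropy reorder; lra.
Qed.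

End Entropy.

Lemma exists_other_index (K : nat) :
  (2 <= K)%N -> forall k : 'I_K, exists k' : 'I_K, k' != k.
Proof.
move=> K2 k; have K0 : (0 < K)%N by apply: leq_trans K2.
case: (eqVneq k (Ordinal K0)) => [->|ne]; first by exists (Ordinal K2).
by exists (Ordinal K0); rewrite eq_sym.
Qed.

Section Scheme.
Variables (R : realType) (Omega : finType) (P : {ffun Omega -> R})
  (F : finFieldType) (N K L M m : nat) (S TF TQ TA : finType)
  (W : Omega -> {ffun 'I_K -> {ffun 'I_L -> F}})
  (RS : Omega -> {ffun 'I_M -> S}) (Fr : Omega -> TF)
  (Q : 'I_N -> 'I_K -> {set 'I_M} -> Omega -> TQ)
  (A : 'I_N -> 'I_K -> {set 'I_M} -> Omega -> TA).
Hypothesis HP : is_distr P.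
Hypothesis VS : valid_scheme P m W RS Fr Q A.

Let Hq : (1 < #|F|)%N := card_finNzRing_gt1 F.

Local Notation I := (mutualInfo P #|F|).
Local Notation J := jointRV.
Local Notation det := (determines P #|F|).
Local Notation RU U := (restrictRV RS U).
Local Notation Wk k := (fun w => W w k).
Local Notation Wbar k := (restrictRV W (~: [set k])).
Local Notation Aall k U := (gatherRV (fun n => A n k U)).
Local Notation Qall k U := (gatherRV (fun n => Q n k U)).
Local Notation msgs := {ffun 'I_K -> {ffun 'I_L -> F}}.
(* Values of the joint variable (Q_n, A_n, W_{1:K}, R_S) compared by (C6). *)
Local Notation view_type := (TQ * (TA * (msgs * {ffun 'I_M -> S})))%type.

(* The user's view (F, A_{1:N}, R_U) determines the query and the answer
   of database n; the query via (C3). *)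
Lemma view_determines_answer_query (n : 'I_N) (k : 'I_K) (U : {set 'I_M}) :
  #|U| = m ->
  det (J Fr (J (Aall k U) (RU U))) (J (A n k U) (Q n k U)).
Proof.
move=> HU; apply: (det_pair HP Hq).
  apply: (det_fun HP Hq
    (g := fun t : TF * ({ffun 'I_N -> TA} * {ffun 'I_M -> option S}) => t.2.1 n)).
  by move=> w; rewrite /= ffunE.
apply: (det_trans HP Hq (Y := Fr)); first exact: (det_fun HP Hq (g := fst)).
apply: (det_trans HP Hq (Y := Qall k U)); first exact: (det_cond HP Hq (C3 VS k HU)).
by apply: (det_fun HP Hq (g := fun t : {ffun 'I_N -> TQ} => t n)) => w; rewrite /= ffunE.
Qed.

Lemma other_message_indep (n : 'I_N) (k k' : 'I_K) (U : {set 'I_M}) :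
  k' != k -> #|U| = m ->
  I (Wk k') (J (A n k U) (Q n k U)) = 0.
Proof.
move=> nk HU.
have := indep_det HP Hq (C7 VS k HU) (view_determines_answer_query n k HU).
rewrite (mutualInfo_swap HP Hq) => indep.
rewrite (mutualInfo_swap HP Hq); apply: (indep_det HP Hq indep).
apply: (det_fun HP Hq (g := fun f : {ffun 'I_K -> option {ffun 'I_L -> F}} =>
                        odflt [ffun => 0] (f k'))) => w.
by rewrite /restrictRV ffunE !inE (negbTE nk).
Qed.

Lemma rest_indep_answer (n : 'I_N) (k : 'I_K) (U : {set 'I_M}) :
  #|U| = m ->
  I (Wbar k) (J (A n k U) (J (Q n k U) (Wk k))) = 0.
Proof.
move=> HU; apply: (indep_det HP Hq (C7 VS k HU)).
apply: (det_trans HP Hq (Y := J (J (A n k U) (Q n k U)) (Wk k))).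
  apply: (det_pair HP Hq (view_determines_answer_query n k HU)).
  exact: (det_cond HP Hq (C5 VS k HU)).
exact: (det_fun HP Hq
  (g := fun t : (TA * TQ) * {ffun 'I_L -> F} => (t.1.1, (t.1.2, t.2)))).
Qed.

(* User privacy (C6) transports the previous fact from the retrieval of W_k'
   to the retrieval of any W_k. *)
Lemma rest_indep_answer_private (n : 'I_N) (k k' : 'I_K) (U : {set 'I_M}) :
  #|U| = m ->
  I (Wbar k') (J (A n k U) (J (Q n k U) (Wk k'))) = 0.
Proof.
move=> HU; have [U' [HU' [_ same_view]]] := C6 VS k k' n HU.
rewrite (mutualInfo_same_law #|F| same_view
  (f := fun t : view_type =>
         [ffun i => if i \in ~: [set k'] then Some (t.2.2.1 i) else None])
  (g := fun t : view_type => (t.2.1, (t.1, t.2.2.1 k')))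
  (X2 := Wbar k') (Y2 := J (A n k' U') (J (Q n k' U') (Wk k')))) //.
exact: rest_indep_answer.
Qed.

Lemma query_data_determines (n : 'I_N) (k k' : 'I_K) (U : {set 'I_M}) :
  #|U| = m ->
  det (J (Q n k U) (J W RS)) (J (Wbar k') (J (A n k U) (J (Q n k U) (Wk k')))).
Proof.
move=> HU; apply: (det_pair HP Hq).
  exact: (det_fun HP Hq (g := fun t : TQ * (msgs * {ffun 'I_M -> S}) =>
            [ffun i => if i \in ~: [set k'] then Some (t.2.1 i) else None])).
apply: (det_pair HP Hq); first exact: (det_cond HP Hq (C4 VS k n HU)).
apply: (det_pair HP Hq); first exact: (det_fun HP Hq (g := fst)).
exact: (det_fun HP Hq (g := fun t : TQ * (msgs * {ffun 'I_M -> S}) => t.2.1 k')).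
Qed.

End Scheme.

Theorem mainTheorem13 (R : realType) (Omega : finType) (P : {ffun Omega -> R})
  (F : finFieldType) (N K L M m : nat) (S TF TQ TA : finType)
  (W : Omega -> {ffun 'I_K -> {ffun 'I_L -> F}})
  (RS : Omega -> {ffun 'I_M -> S}) (Fr : Omega -> TF)
  (Q : 'I_N -> 'I_K -> {set 'I_M} -> Omega -> TQ)
  (A : 'I_N -> 'I_K -> {set 'I_M} -> Omega -> TA) :
  is_distr P ->
  (1 <= N)%N -> (2 <= K)%N ->
  uniformRV P W ->
  valid_scheme P m W RS Fr Q A ->
  forall (n : 'I_N) (k : 'I_K) (U : {set 'I_M}), #|U| = m ->
    0 >= condEntropy P #|F| (A n k U) (jointRV (Q n k U) (restrictRV RS U))
         - entropy P #|F| RS.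
Proof.
move=> HP _ K2 _ VS n k U HU.
have Hq := card_finNzRing_gt1 F.
have [k' nk] := exists_other_index K2 k.
(* H(A | Q, R_U) <= H(A | Q), then the counting argument with W split
   into W_k' and the remaining messages. *)
rewrite subr_le0; apply: le_trans (condEntropy_cond_le HP Hq _ _ _) _.
apply: (condEntropy_le_randomness HP Hq (W := W) (X1 := fun w => W w k')
          (X2 := restrictRV W (~: [set k']))).
- exact: (H_split_component HP Hq).
- exact: (query_data_determines HP VS n k k' HU).
- exact: (other_message_indep HP VS n nk HU).
- exact: (rest_indep_answer_private HP VS n k k' HU).
Qed.
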